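(* Let $n\ge2$ and let $\tau=(\tau^1,\dots,\tau^n)$ be an $\mathbf R^n$-valued random variable taking exactly $n+1$ distinct values, each with positive probability, such that $\mathbf E[\tau^i]=0$ for $i=1,\dots,n$ and $\mathbf E[\tau^i\tau^j]=\delta_{ij}$ for $i,j=1,\dots,n$. Then there exists $(i,j,k)\in\{1,\dots,n\}^3$ with $\mathbf E[\tau^i\tau^j\tau^k]\ne0$. *)

(* A random vector tau in R^n taking finitely many values is
   described by its (discrete) law: the list of its distinct values
   v k (k : 'I_m) with their probabilities p k. *)
From mathcomp Require Import all_boot all_order all_algebra.
From mathcomp Require Import reals.
Set Implicit Arguments. Unset Strict Implicit. Unset Printing Implicit Defensive.
Import Order.TTheory GRing.Theory Num.Theory.
Local Open Scope ring_scope.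

Definition discrete_law (R : realType) (n m : nat)
  (v : 'I_m -> 'rV[R]_n) (p : 'I_m -> R) : Prop :=
  injective v /\ (forall k, 0 < p k) /\ \sum_(k < m) p k = 1.

Definition dexpect (R : realType) (n m : nat)
  (v : 'I_m -> 'rV[R]_n) (p : 'I_m -> R) (f : 'rV[R]_n -> R) : R :=
  \sum_(k < m) p k * f (v k).

(** If all third moments vanished, the isotropy conditions would make the
   (n+1) x (n+1) matrix with rows (1, v_k), weighted by the probabilities,
   orthogonal; its column orthogonality says that p_l (1 + <v_k, v_l>) is
   1 for k = l and 0 otherwise.  Hence <v_k, v_l> = -1 for k <> l, and the
   vanishing third moment E[<tau, v_l>^3] = 0 becomes
   p_l <v_l, v_l>^3 = 1 - p_l.  Together with p_l (1 + <v_l, v_l>) = 1 this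
   forces p_l >= 1/2 for every one of the n + 1 >= 3 atoms, which is
   incompatible with total mass 1. *)
From mathcomp Require Import all_boot all_order all_algebra.
From mathcomp Require Import reals.
From mathcomp Require Import ring lra.
Import Order.TTheory GRing.Theory Num.Theory.
Local Open Scope ring_scope.

Definition dotr {R : pzSemiRingType} {n : nat} (x y : 'rV[R]_n) : R :=
  \sum_(i < n) x ord0 i * y ord0 i.

Lemma sumr_exp3 (R : comPzRingType) n (F : 'I_n -> R) :
  (\sum_i F i) ^+ 3 = \sum_i \sum_j \sum_k F i * F j * F k.
Proof.
rewrite exprS expr2 big_distrl /=; apply: eq_bigr => i _.
rewrite big_distrl big_distrr /=; apply: eq_bigr => j _.
by rewrite mulrA big_distrr.
Qed.

Lemma weight_ge_half (R : realFieldType) (p t : R) :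
  0 < p -> p * (1 + t) = 1 -> p * t ^+ 3 = 1 - p -> 1 / 2 <= p.
Proof.
move=> p_gt0 mass cube.
have /eqP : p * (t * (t - 1) * (t + 1)) = 0.
  have -> : p * (t * (t - 1) * (t + 1)) =
            (p * t ^+ 3 - (1 - p)) - (p * (1 + t) - 1) by ring.
  by rewrite mass cube !subrr.
rewrite mulf_eq0 (gt_eqF p_gt0) /= !mulf_eq0 subr_eq0 addr_eq0.
case/orP => [/orP [/eqP t0 | /eqP t1] | /eqP tN1]; move: mass.
- by rewrite t0 addr0 mulr1 => ->; lra.
- by rewrite t1; lra.
- by rewrite tN1 subrr mulr0; lra.
Qed.

Section IsotropicLaw.

Variables (R : realType) (n : nat).
Variables (v : 'I_n.+1 -> 'rV[R]_n) (p : 'I_n.+1 -> R).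

Hypothesis mass1 : \sum_k p k = 1.
Hypothesis mean0 : forall i : 'I_n, dexpect v p (fun x => x ord0 i) = 0.
Hypothesis covariance1 : forall i j : 'I_n,
  dexpect v p (fun x => x ord0 i * x ord0 j) = (i == j)%:R.

(* Row k is (1, v_k): column ord0 holds the constant 1. *)
Definition aug_mx : 'M[R]_n.+1 :=
  \matrix_(k, a) (if unlift ord0 a is Some i then v k ord0 i else 1).

Lemma aug_mx0 k : aug_mx k ord0 = 1.
Proof. by rewrite mxE unlift_none. Qed.

Lemma aug_mx_lift k i : aug_mx k (lift ord0 i) = v k ord0 i.
Proof. by rewrite mxE liftK. Qed.

Definition weighted_aug_tmx : 'M[R]_n.+1 := \matrix_(a, k) (p k * aug_mx k a).

Lemma weighted_aug_tmxE a k : weighted_aug_tmx a k = p k * aug_mx k a.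
Proof. exact: mxE. Qed.

Lemma weighted_aug_tmxK : weighted_aug_tmx *m aug_mx = 1%:M.
Proof.
apply/matrixP => a b; rewrite !mxE.
under eq_bigr do rewrite weighted_aug_tmxE.
case: (unliftP ord0 a) => [i ->|->]; case: (unliftP ord0 b) => [j ->|->].
- rewrite (inj_eq lift_inj) -covariance1; apply: eq_bigr => k _.
  by rewrite !aug_mx_lift mulrA.
- rewrite eq_sym (negbTE (neq_lift _ _)) /= -[RHS](mean0 i).
  apply: eq_bigr => k _.
  by rewrite aug_mx_lift aug_mx0 mulr1.
- rewrite (negbTE (neq_lift _ _)) /= -[RHS](mean0 j).
  apply: eq_bigr => k _.
  by rewrite aug_mx_lift aug_mx0 mulr1.
- by rewrite eqxx -[RHS]mass1; apply: eq_bigr => k _; rewrite aug_mx0 !mulr1.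
Qed.

Lemma dual_orthogonality k l : p l * (1 + dotr (v k) (v l)) = (k == l)%:R.
Proof.
move/matrixP: (mulmx1C weighted_aug_tmxK) => /(_ k l); rewrite !mxE => <-.
rewrite big_ord_recl weighted_aug_tmxE !aug_mx0 mul1r mulrDr mulr1.
congr (_ + _); rewrite mulr_sumr; apply: eq_bigr => i _.
by rewrite weighted_aug_tmxE !aug_mx_lift mulrCA.
Qed.

Lemma dexpect_dotr_cube (u : 'rV[R]_n) :
  dexpect v p (fun x => dotr x u ^+ 3) =
  \sum_i \sum_j \sum_k u ord0 i * u ord0 j * u ord0 k *
    dexpect v p (fun x => x ord0 i * x ord0 j * x ord0 k).
Proof.
under [RHS]eq_bigr do under eq_bigr do under eq_bigr do rewrite mulr_sumr.
under [RHS]eq_bigr do under eq_bigr do rewrite exchange_big.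
under [RHS]eq_bigr do rewrite exchange_big.
rewrite [RHS]exchange_big /=; apply: eq_bigr => q _.
rewrite sumr_exp3 mulr_sumr.
do 3![apply: eq_bigr => ? _; rewrite ?mulr_sumr]; ring.
Qed.

Lemma atom_weight_ge_half l :
  (forall k, 0 < p k) ->
  (forall i j k : 'I_n,
     dexpect v p (fun x => x ord0 i * x ord0 j * x ord0 k) = 0) ->
  1 / 2 <= p l.
Proof.
move=> p_gt0 skew0.
have dot_offdiag q : q != l -> dotr (v q) (v l) = -1.
  move=> ql; apply/eqP; rewrite -addr_eq0 addrC.
  have /eqP := dual_orthogonality q l.
  by rewrite (negbTE ql) mulf_eq0 (gt_eqF (p_gt0 l)).
have cube0 : dexpect v p (fun x => dotr x (v l) ^+ 3) = 0.
  rewrite dexpect_dotr_cube big1 // => i _; rewrite big1 // => j _.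
  by rewrite big1 // => k _; rewrite skew0 mulr0.
apply: (@weight_ge_half _ _ (dotr (v l) (v l)) (p_gt0 l)).
  by rewrite dual_orthogonality eqxx.
move: cube0; rewrite /dexpect (bigD1 l) //= => /eqP; rewrite addr_eq0 => /eqP ->.
rewrite -[in RHS]mass1 [in RHS](bigD1 l) //= addrC addrK -sumrN.
by apply: eq_bigr => q ql; rewrite dot_offdiag // -signr_odd mulrN1 opprK.
Qed.

End IsotropicLaw.

Theorem lemma6p1 (R : realType) (n : nat) (hn : (2 <= n)%N)
  (v : 'I_n.+1 -> 'rV[R]_n) (p : 'I_n.+1 -> R) :
  discrete_law v p ->
  (forall i : 'I_n, dexpect v p (fun x => x ord0 i) = 0) ->
  (forall i j : 'I_n,
     dexpect v p (fun x => x ord0 i * x ord0 j) = (i == j)%:R) ->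
  exists i j k : 'I_n,
    dexpect v p (fun x => x ord0 i * x ord0 j * x ord0 k) != 0.
Proof.
move=> [_ [p_gt0 mass1]] mean0 covariance1.
have [/existsP[i /existsP[j /existsP[k nz]]] | no_skew] := boolP
  [exists i, exists j, exists k,
     dexpect v p (fun x => x ord0 i * x ord0 j * x ord0 k) != 0].
  by exists i, j, k.
have skew0 i j k : dexpect v p (fun x => x ord0 i * x ord0 j * x ord0 k) = 0.
  apply/eqP; apply: contraNT no_skew => nz.
  by apply/existsP; exists i; apply/existsP; exists j; apply/existsP; exists k.
have : \sum_(k < n.+1) (1 / 2 : R) <= \sum_k p k.
  by apply: ler_sum => l _; apply: atom_weight_ge_half.
rewrite mass1 sumr_const card_ord -mulr_natr.
have : (3 : R) <= n.+1%:R by rewrite ler_nat.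
lra.
Qed.
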